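(* Consider the ODE system \[ \dot S = -\kappa\rho S(\pi_1 W_1+\pi_2 W_2),\quad \dot I = \kappa\rho S(\pi_1 W_1+\pi_2 W_2)-\gamma I,\quad \dot R = \gamma I, \] \[ \dot W_1 = \alpha\eta I+\delta_2 W_2-(\xi_1+\delta_1)W_1,\quad \dot W_2 = \alpha(1-\eta) I+\delta_1 W_1-(\xi_2+\delta_2)W_2, \] with parameters $\kappa,\rho,\pi_1,\pi_2,\gamma,\alpha,\xi_1,\xi_2>0$, $\delta_1,\delta_2\ge 0$, $0\le\eta\le 1$, and total population $N$, with disease-free equilibrium $(S,I,R,W_1,W_2)=(N,0,0,0,0)$. Let $\tau_i=1/(\xi_i+\delta_i)$ and $\phi_i=\delta_i/(\xi_i+\delta_i)$ for $i=1,2$. Then the basic reproduction number of this system, computed by the next generation method, is \[ \mathcal{R}_0=\frac{\alpha\kappa\rho N}{\gamma}\left(\pi_1\tau_1\,\frac{\eta+(1-\eta)\phi_2}{1-\phi_1\phi_2}+\pi_2\tau_2\,\frac{(1-\eta)+\eta\phi_1}{1-\phi_1\phi_2}\right). \]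
   Context: The next generation method: with infected compartments ordered $(I,W_1,W_2)$, let $F$ be the Jacobian at the disease-free equilibrium of the new-infection terms, namely the term $\kappa\rho S(\pi_1W_1+\pi_2W_2)$ in the $I$ equation (all other entries zero), and let $V$ be the Jacobian at the disease-free equilibrium of the remaining transition terms (so the infected subsystem linearization is $F-V$, with shedding $\alpha\eta I,\alpha(1-\eta)I$, conversions $\delta_i W_i$, removals and recovery all placed in $V$). Then $\mathcal{R}_0$ is the spectral radius of $FV^{-1}$. Here $S,I,R$ are numbers of susceptible, infectious, recovered people and $W_1,W_2$ are environmental concentrations of labile and persistent pathogens. *)

From HB Require Import structures.
From mathcomp Require Import all_boot all_order all_algebra.
From mathcomp Require Import complex.
Set Implicit Arguments. Unset Strict Implicit. Unset Printing Implicit Defensive.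
Import Order.TTheory GRing.Theory Num.Theory.
Local Open Scope ring_scope.
Local Open Scope complex_scope.

(* Real coefficients embedded in the algebraically closed field R[i]. *)
Definition cmx (R : rcfType) (m n : nat) (A : 'M[R]_(m, n)) : 'M[R[i]]_(m, n) :=
  map_mx (fun x => x%:C) A.

Definition is_spectral_radius (R : rcfType) (n : nat) (A : 'M[R]_n) (r : R) : Prop :=
  (exists2 l : R[i], eigenvalue (cmx A) l & `|l| = r%:C) /\
  (forall l : R[i], eigenvalue (cmx A) l -> `|l| <= r%:C).

(* Infected compartments ordered (I, W1, W2); index 0 = I, 1 = W1, 2 = W2. *)
(* F: Jacobian at the DFE (S = N) of the new-infection term
   kappa rho S (pi1 W1 + pi2 W2) in the I equation. *)
Definition Fmx (R : rcfType) (kappa rho pi1 pi2 N : R) : 'M[R]_3 :=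
  \matrix_(i < 3, j < 3)
    match nat_of_ord i, nat_of_ord j with
    | 0, 1 => kappa * rho * N * pi1
    | 0, 2 => kappa * rho * N * pi2
    | _, _ => 0
    end.

(* V: Jacobian at the DFE of the remaining transition terms, with sign
   convention so that the linearization of the infected subsystem is F - V. *)
Definition Vmx (R : rcfType) (gamma alpha eta xi1 xi2 delta1 delta2 : R) : 'M[R]_3 :=
  \matrix_(i < 3, j < 3)
    match nat_of_ord i, nat_of_ord j with
    | 0, 0 => gamma
    | 1, 0 => - (alpha * eta)
    | 1, 1 => xi1 + delta1
    | 1, 2 => - delta2
    | 2, 0 => - (alpha * (1 - eta))
    | 2, 1 => - delta1
    | 2, 2 => xi2 + delta2
    | _, _ => 0
    end.

Definition is_R0 (R : rcfType)
  (kappa rho pi1 pi2 gamma alpha eta xi1 xi2 delta1 delta2 N r : R) : Prop :=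
  is_spectral_radius (Fmx kappa rho pi1 pi2 N
                      *m invmx (Vmx gamma alpha eta xi1 xi2 delta1 delta2)) r.

From HB Require Import structures.
From mathcomp Require Import all_boot all_order all_algebra.
From mathcomp Require Import complex.
From mathcomp Require Import ring lra.
Set Implicit Arguments. Unset Strict Implicit.
Import Order.TTheory GRing.Theory Num.Theory.
Local Open Scope ring_scope.

(* New infections only enter the I compartment, so F, and hence F V^-1, vanishes
   outside its first row.  The spectrum of F V^-1 is therefore {0, (F V^-1)_00},
   and R0 = (F V^-1)_00 = kappa rho N (pi1 c1 + pi2 c2), where (1/gamma, c1, c2),
   the first column of V^-1, is the infectious time and the pathogen loads of the
   two reservoirs generated by one infectious individual.  V is an M-matrix, so
   V^-1 >= 0 entrywise and this entry is nonnegative.  Dividing numerator and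
   denominator of c1, c2 by (xi1 + delta1)(xi2 + delta2) gives the tau/phi form. *)

Lemma char_poly_trmx (R : comNzRingType) n (A : 'M[R]_n) :
  char_poly A^T = char_poly A.
Proof.
by rewrite /char_poly -det_tr /char_poly_mx linearB /= tr_scalar_mx -map_trmx trmxK.
Qed.

Lemma eigenvalue_trmx_trig (F : fieldType) n (A : 'M[F]_n) l :
  is_trig_mx A^T -> eigenvalue A l = (l \in [seq A i i | i : 'I_n]).
Proof.
move=> trigAT; rewrite eigenvalue_root_char -char_poly_trmx char_poly_trig //.
rewrite -root_prod_XsubC big_image; congr root.
by apply: eq_big => // i _; rewrite mxE.
Qed.

Lemma eigenvalue_row0_mx (F : fieldType) n (A : 'M[F]_n.+2) l :
  (forall i j, i != 0 -> A i j = 0) ->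
  eigenvalue A l = (l == A 0 0) || (l == 0).
Proof.
move=> rowsA0; rewrite eigenvalue_trmx_trig; last first.
  by apply/is_trig_mxP => i j lt_ij; rewrite mxE rowsA0 // -lt0n (leq_ltn_trans _ lt_ij).
apply/mapP/orP => [[i _ ->] | [] /eqP ->].
- by have [-> | /rowsA0 ->] := eqVneq i 0; [left | right].
- by exists 0; rewrite ?mem_enum.
- by exists ord_max; rewrite ?mem_enum ?rowsA0.
Qed.

Lemma is_spectral_radius_row0_mx (R : rcfType) n (A : 'M[R]_n.+2) :
  (forall i j, i != 0 -> A i j = 0) -> 0 <= A 0 0 ->
  is_spectral_radius A (A 0 0).
Proof.
move=> rowsA0 A00_ge0.
have eigAE l : eigenvalue (cmx A) l = (l == (A 0 0)%:C%C) || (l == 0).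
  by rewrite eigenvalue_row0_mx ?mxE // => i j /rowsA0; rewrite mxE => ->.
have normA00 : `|(A 0 0)%:C%C| = (A 0 0)%:C%C by rewrite ger0_norm ?ler0c.
split=> [|l]; first by exists (A 0 0)%:C%C; rewrite ?eigAE ?eqxx.
by rewrite eigAE => /orP[] /eqP ->; rewrite ?normA00 ?normr0 ?ler0c.
Qed.

Section NextGenerationMatrix.

Variable R : rcfType.

Definition env_block_det (xi1 xi2 delta1 delta2 : R) : R :=
  (xi1 + delta1) * (xi2 + delta2) - delta1 * delta2.

Lemma env_block_detE (xi1 xi2 delta1 delta2 : R) :
  env_block_det xi1 xi2 delta1 delta2 = xi1 * xi2 + xi1 * delta2 + delta1 * xi2.
Proof. by rewrite /env_block_det; ring. Qed.

Definition Vmx_inv (gamma alpha eta xi1 xi2 delta1 delta2 : R) : 'M[R]_3 :=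
  let D := env_block_det xi1 xi2 delta1 delta2 in
  \matrix_(i < 3, j < 3)
    match nat_of_ord i, nat_of_ord j with
    | 0, 0 => gamma^-1
    | 1, 0 => alpha * ((xi2 + delta2) * eta + delta2 * (1 - eta)) / (gamma * D)
    | 1, 1 => (xi2 + delta2) / D
    | 1, 2 => delta2 / D
    | 2, 0 => alpha * (delta1 * eta + (xi1 + delta1) * (1 - eta)) / (gamma * D)
    | 2, 1 => delta1 / D
    | 2, 2 => (xi1 + delta1) / D
    | _, _ => 0
    end.

Lemma invmx_Vmx (gamma alpha eta xi1 xi2 delta1 delta2 : R) :
  gamma != 0 -> env_block_det xi1 xi2 delta1 delta2 != 0 ->
  invmx (Vmx gamma alpha eta xi1 xi2 delta1 delta2) =
  Vmx_inv gamma alpha eta xi1 xi2 delta1 delta2.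
Proof.
move=> gamma_neq0 D_neq0.
set V := Vmx _ _ _ _ _ _ _; set W := Vmx_inv _ _ _ _ _ _ _.
have VW1 : V *m W = 1%:M.
  apply/matrixP => i j; rewrite !mxE !big_ord_recl big_ord0 !mxE /=.
  rewrite /env_block_det in D_neq0 *.
  by case: i j => [[|[|[|?]]] ?] [[|[|[|?]]] ?] //=; field; rewrite D_neq0.
by have := mulKmx (mulmx1_unit VW1).1 W; rewrite VW1 mulmx1.
Qed.

Lemma mulFmx_row_neq0 (kappa rho pi1 pi2 N : R) (B : 'M[R]_3) i j :
  i != 0 -> (Fmx kappa rho pi1 pi2 N *m B) i j = 0.
Proof.
rewrite !mxE !big_ord_recl big_ord0 !mxE.
by case: i => [[|[|[|?]]] ?] //= _; rewrite !mul0r !addr0.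
Qed.

Lemma mulFmx00 (kappa rho pi1 pi2 N : R) (B : 'M[R]_3) :
  (Fmx kappa rho pi1 pi2 N *m B) 0 0 = kappa * rho * N * (pi1 * B 1 0 + pi2 * B 2 0).
Proof.
rewrite !mxE !big_ord_recl big_ord0 !mxE /= mul0r add0r addr0 mulrDr !mulrA.
by congr (_ * B _ _ + _ * B _ _); apply/val_inj.
Qed.

Lemma Vmx_inv_ge0 (gamma alpha eta xi1 xi2 delta1 delta2 : R) i j :
  0 <= gamma -> 0 <= alpha -> 0 <= eta <= 1 ->
  0 <= xi1 -> 0 <= xi2 -> 0 <= delta1 -> 0 <= delta2 ->
  0 <= Vmx_inv gamma alpha eta xi1 xi2 delta1 delta2 i j.
Proof.
move=> gamma_ge0 alpha_ge0 /andP[eta_ge0 eta_le1] xi1_ge0 xi2_ge0 delta1_ge0 delta2_ge0.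
have D_ge0 : 0 <= env_block_det xi1 xi2 delta1 delta2.
  by rewrite env_block_detE !addr_ge0 ?mulr_ge0.
have eta'_ge0 : 0 <= 1 - eta by rewrite subr_ge0.
(* Hide D and 1 - eta, which addr_ge0 would otherwise split. *)
rewrite mxE; move: (env_block_det _ _ _ _) D_ge0 (1 - eta) eta'_ge0 => D D_ge0 eta' eta'_ge0.
by case: i j => [[|[|[|?]]] ?] [[|[|[|?]]] ?] //=;
  rewrite ?(invr_ge0, divr_ge0, mulr_ge0, addr_ge0).
Qed.

Lemma R0_formulaE (kappa rho pi1 pi2 gamma alpha eta xi1 xi2 delta1 delta2 N : R) :
  gamma != 0 -> xi1 + delta1 != 0 -> xi2 + delta2 != 0 ->
  env_block_det xi1 xi2 delta1 delta2 != 0 ->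
  alpha * kappa * rho * N / gamma *
    (pi1 * (1 / (xi1 + delta1)) *
       ((eta + (1 - eta) * (delta2 / (xi2 + delta2))) /
        (1 - delta1 / (xi1 + delta1) * (delta2 / (xi2 + delta2)))) +
     pi2 * (1 / (xi2 + delta2)) *
       (((1 - eta) + eta * (delta1 / (xi1 + delta1))) /
        (1 - delta1 / (xi1 + delta1) * (delta2 / (xi2 + delta2))))) =
  (Fmx kappa rho pi1 pi2 N *m Vmx_inv gamma alpha eta xi1 xi2 delta1 delta2) 0 0.
Proof.
move=> gamma_neq0 a1_neq0 a2_neq0 D_neq0.
have -> : 1 - delta1 / (xi1 + delta1) * (delta2 / (xi2 + delta2)) =
          env_block_det xi1 xi2 delta1 delta2 / ((xi1 + delta1) * (xi2 + delta2)).
  by rewrite /env_block_det; field; rewrite a1_neq0 a2_neq0.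
rewrite mulFmx00 !mxE /=.
by field; rewrite D_neq0 gamma_neq0 a1_neq0 a2_neq0.
Qed.

End NextGenerationMatrix.

Theorem proposition1 (R : rcfType)
  (kappa rho pi1 pi2 gamma alpha xi1 xi2 delta1 delta2 eta N : R)
  (hkappa : 0 < kappa) (hrho : 0 < rho) (hpi1 : 0 < pi1) (hpi2 : 0 < pi2)
  (hgamma : 0 < gamma) (halpha : 0 < alpha) (hxi1 : 0 < xi1) (hxi2 : 0 < xi2)
  (hdelta1 : 0 <= delta1) (hdelta2 : 0 <= delta2)
  (heta0 : 0 <= eta) (heta1 : eta <= 1) (hN : 0 < N) :
  let tau1 := 1 / (xi1 + delta1) in
  let tau2 := 1 / (xi2 + delta2) in
  let phi1 := delta1 / (xi1 + delta1) in
  let phi2 := delta2 / (xi2 + delta2) in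
  is_R0 kappa rho pi1 pi2 gamma alpha eta xi1 xi2 delta1 delta2 N
    (alpha * kappa * rho * N / gamma *
      (pi1 * tau1 * ((eta + (1 - eta) * phi2) / (1 - phi1 * phi2)) +
       pi2 * tau2 * (((1 - eta) + eta * phi1) / (1 - phi1 * phi2)))).
Proof.
move=> tau1 tau2 phi1 phi2.
have D_gt0 : 0 < env_block_det xi1 xi2 delta1 delta2.
  by rewrite env_block_detE -addrA ltr_pwDl ?mulr_gt0 // addr_ge0 // mulr_ge0 // ltW.
have a1_gt0 : 0 < xi1 + delta1 by lra.
have a2_gt0 : 0 < xi2 + delta2 by lra.
rewrite /is_R0 invmx_Vmx ?gt_eqF // R0_formulaE ?gt_eqF //.
apply: is_spectral_radius_row0_mx => [i j|]; first exact: mulFmx_row_neq0.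
rewrite mulFmx00; repeat (apply: mulr_ge0 || apply: addr_ge0).
all: by rewrite ?Vmx_inv_ge0 ?heta0 // ltW.
Qed.
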